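(* Let $R \in \mathrm{SO}(3)$, let $t \in \mathbb{R}^3$, and let $E = [t]_\times R$ be non-zero. Put $\tau = \operatorname{tr} R$. Then $$\frac{1}{2}(\tau^2 - 1)\operatorname{tr}(EE^{\mathrm T}) + (\tau + 1)\operatorname{tr}(E^2) - \tau\,(\operatorname{tr} E)^2 = 0.$$
   Context: For a 3-vector $a$, $[a]_\times$ denotes the $3\times 3$ skew-symmetric matrix with $[a]_\times b = a\times b$ for every $b\in\mathbb{R}^3$. *)

From HB Require Import structures.
From mathcomp Require Import all_boot all_order all_algebra.
Set Implicit Arguments. Unset Strict Implicit. Unset Printing Implicit Defensive.
Import Order.TTheory GRing.Theory Num.Theory.
Local Open Scope ring_scope.

(* [a]_x : the crossmx-symmetric matrix with [a]_x b = a x b, for a column vector a.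
   Indices 0,1,2 correspond to coordinates 1,2,3. *)
Definition crossmx (R : pzRingType) (a : 'cV[R]_3) : 'M[R]_3 :=
  let a0 := a (inord 0) 0 in
  let a1 := a (inord 1) 0 in
  let a2 := a (inord 2) 0 in
  \matrix_(i < 3, j < 3)
    (match nat_of_ord i, nat_of_ord j with
     | 0%N, 1%N => - a2
     | 0%N, 2%N => a1
     | 1%N, 0%N => a2
     | 1%N, 2%N => - a0
     | 2%N, 0%N => - a1
     | 2%N, 1%N => a0
     | _, _ => 0
     end).

Definition is_SO3 (R : pzRingType) (M : 'M[R]_3) : Prop :=
  M^T *m M = 1%:M /\ \det M = 1.

(* Orthogonality gives E E^T = [t]_x [t]_x^T,
   whose trace is 2|t|^2.  For every 3x3 matrix (tr E)^2 = tr(E^2) + 2 tr(adj E),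
   and adj E = adj R adj [t]_x = R^T t t^T, so tr(adj E) = t^T R t.  Finally
   R [t]_x = [R t]_x R moves the second factor [t]_x of E^2 past R, and the
   Cayley-Hamilton relation R^2 = tau R - tau + R^T (adj R = R^T) reduces
   tr(E^2) to 2 tau t^T R t + (1 - tau^2) |t|^2.  The identity then holds in
   the three scalars tau, |t|^2 and t^T R t. *)

From HB Require Import structures.
From mathcomp Require Import all_boot all_order all_algebra ring.
Import Order.TTheory GRing.Theory Num.Theory.
Local Open Scope ring_scope.

Local Notation i0 := (@Ordinal 3 0 isT).
Local Notation i1 := (@Ordinal 3 1 isT).
Local Notation i2 := (@Ordinal 3 2 isT).
Local Notation j0 := (@Ordinal 2 0 isT).
Local Notation j1 := (@Ordinal 2 1 isT).

Variant ord3_spec : 'I_3 -> Type :=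
  | Ord3_0 : ord3_spec i0 | Ord3_1 : ord3_spec i1 | Ord3_2 : ord3_spec i2.

Lemma ord3P (i : 'I_3) : ord3_spec i.
Proof.
by case: i => [[|[|[|//]]] Hi]; rewrite (bool_irrelevance Hi isT); constructor.
Qed.

Lemma big_ord3 (V : nmodType) (f : 'I_3 -> V) :
  \sum_(i < 3) f i = f i0 + f i1 + f i2.
Proof.
rewrite !big_ord_recr big_ord0 /= add0r.
by congr (_ + _ + _); congr f; apply: val_inj.
Qed.

Lemma det_mx2 (F : comRingType) (A : 'M[F]_2) :
  \det A = A j0 j0 * A j1 j1 - A j0 j1 * A j1 j0.
Proof.
rewrite (expand_det_row _ j0) !big_ord_recr big_ord0 /= add0r.
rewrite /cofactor !det_mx11 !mxE /=.
have -> : widen_ord (leqnSn 1) ord_max = j0 by apply: val_inj.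
have -> : ord_max = j1 by apply: val_inj.
have -> : lift j0 ord0 = j1 by apply: val_inj.
have -> : lift j1 ord0 = j0 by apply: val_inj.
ring.
Qed.

Lemma lift3E :
  (lift i0 j0 = i1) * (lift i0 j1 = i2) * (lift i1 j0 = i0) * (lift i1 j1 = i2)
  * (lift i2 j0 = i0) * (lift i2 j1 = i1).
Proof. by do !split; apply: val_inj. Qed.

Lemma inord3E : (inord 0 = i0) * (inord 1 = i1) * (inord 2 = i2).
Proof. by do !split; apply: val_inj; rewrite /= inordK. Qed.

Ltac mx3_ring :=
  try (apply/matrixP; intros i j; destruct (ord3P i); destruct (ord3P j));
  rewrite /mxtrace /crossmx ?expr2 !(mxE, big_ord3, big_ord1) /cofactor ?det_mx2
          ?(mxE, big_ord3, lift3E, inord3E) /=;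
  ring.

Section Matrix3.
Context {F : comRingType}.
Implicit Types (a b : 'cV[F]_3) (A B : 'M[F]_3).

(* Cayley-Hamilton divided by A: the linear coefficient of the characteristic
   polynomial, the sum of the principal 2x2 minors, is [\tr (\adj A)]. *)
Lemma adj_mx3 A : \adj A = A *m A - \tr A *: A + (\tr (\adj A))%:M.
Proof. mx3_ring. Qed.

Lemma sqr_mxtrace3 A : \tr A ^+ 2 = \tr (A *m A) + \tr (\adj A) *+ 2.
Proof. mx3_ring. Qed.

Lemma adjM3 A B : \adj (A *m B) = \adj B *m \adj A.
Proof. mx3_ring. Qed.

Lemma tr_crossmx a : (crossmx a)^T = - crossmx a.
Proof. mx3_ring. Qed.

Lemma crossmx_mul a b : crossmx a *m crossmx b = b *m a^T - ((a^T *m b) 0 0)%:M.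
Proof. mx3_ring. Qed.

(* [(A a) x (A b) = (cof A) (a x b)] with [cof A = (\adj A)^T]. *)
Lemma crossmx_mulmx A a : crossmx (A *m a) *m A = (\adj A)^T *m crossmx a.
Proof. mx3_ring. Qed.

Lemma adj_crossmx a : \adj (crossmx a) = a *m a^T.
Proof. mx3_ring. Qed.

End Matrix3.

Lemma mxtrace_col_row (F : comRingType) n (a b : 'cV[F]_n) :
  \tr (a *m b^T) = (b^T *m a) 0 0.
Proof. by rewrite mxtrace_mulC trace_mx11. Qed.

Lemma mxtrace_trmx_mul_col_row (F : comRingType) n (A : 'M[F]_n) (a : 'cV[F]_n) :
  \tr (A^T *m (a *m a^T)) = \tr (A *m (a *m a^T)).
Proof. by rewrite -mxtrace_tr !trmx_mul !trmxK mxtrace_mulC. Qed.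

Section SpecialOrthogonal.
Context {F : comRingType} {R : 'M[F]_3} (SO3R : is_SO3 R).

Lemma SO3_adj : \adj R = R^T.
Proof.
have [RtR detR] := SO3R.
by rewrite -[\adj R]mul1mx -RtR -mulmxA mul_mx_adj detR mulmx1.
Qed.

Lemma SO3_mul_tr : R *m R^T = 1%:M.
Proof. by have [_ detR] := SO3R; rewrite -SO3_adj mul_mx_adj detR. Qed.

Lemma SO3_tr : R^T = R *m R - \tr R *: R + (\tr R)%:M.
Proof. by rewrite -SO3_adj {1}adj_mx3 SO3_adj mxtrace_tr. Qed.

Lemma SO3_mxtrace_sqr_mul M :
  \tr (R *m R *m M) = \tr (R^T *m M) + \tr R * \tr (R *m M) - \tr R * \tr M.
Proof. rewrite SO3_tr; mx3_ring. Qed.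

Lemma SO3_crossmx a : crossmx (R *m a) *m R = R *m crossmx a.
Proof. by rewrite crossmx_mulmx SO3_adj trmxK. Qed.

End SpecialOrthogonal.

Section EssentialMatrix.
Context {F : comRingType} {R : 'M[F]_3} (SO3R : is_SO3 R) (t : 'cV[F]_3).
Local Notation E := (crossmx t *m R).
Local Notation T := (t *m t^T).

Lemma essential_mxtrace_mul_tr : \tr (E *m E^T) = \tr T *+ 2.
Proof.
rewrite trmx_mul !mulmxA -(mulmxA _ R) (SO3_mul_tr SO3R) mulmx1 tr_crossmx mulmxN.
rewrite crossmx_mul raddfN raddfB /= mxtrace_scalar mxtrace_col_row.
ring.
Qed.

Lemma essential_mxtrace_adj : \tr (\adj E) = \tr (R *m T).
Proof.
by rewrite adjM3 (SO3_adj SO3R) adj_crossmx mxtrace_trmx_mul_col_row.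
Qed.

Lemma essential_mxtrace_sqr :
  \tr (E *m E) = \tr R * \tr (R *m T) *+ 2 + (1 - \tr R ^+ 2) * \tr T.
Proof.
have -> : E *m E = crossmx t *m crossmx (R *m t) *m (R *m R).
  by rewrite !mulmxA -(mulmxA _ (crossmx (R *m t))) (SO3_crossmx SO3R) !mulmxA.
rewrite crossmx_mul mulmxBl raddfB /= mul_scalar_mx mxtraceZ -mxtrace_col_row.
have [RtR _] := SO3R.
have trRR := SO3_mxtrace_sqr_mul SO3R 1%:M.
rewrite !mulmx1 mxtrace_tr mxtrace1 in trRR.
have trRRT := SO3_mxtrace_sqr_mul SO3R T.
rewrite mxtrace_trmx_mul_col_row in trRRT.
have trRRRT := SO3_mxtrace_sqr_mul SO3R (R *m T).
rewrite (mulmxA R^T) RtR mul1mx in trRRRT.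
rewrite -!mulmxA in trRRT trRRRT.
rewrite mxtrace_mulC -!mulmxA.
by rewrite trRRRT trRRT trRR; ring.
Qed.

End EssentialMatrix.

Theorem proposition1 (F : realFieldType) (R : 'M[F]_3) (t : 'cV[F]_3) :
  is_SO3 R ->
  crossmx t *m R != 0 ->
  (2%:R)^-1 * ((\tr R) ^+ 2 - 1) * \tr ((crossmx t *m R) *m (crossmx t *m R)^T)
    + (\tr R + 1) * \tr ((crossmx t *m R) *m (crossmx t *m R))
    - \tr R * (\tr (crossmx t *m R)) ^+ 2 = 0.
Proof.
move=> SO3R _.
rewrite (sqr_mxtrace3 (crossmx t *m R)) (essential_mxtrace_adj SO3R).
rewrite (essential_mxtrace_sqr SO3R) (essential_mxtrace_mul_tr SO3R).
by field.
Qed.
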